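(* Let $n\in\{2,3\}$, $d\ge1$, $p\in\mathcal H(n,d)$, let $P=S\cdot Q$ be the induced homogeneous polynomial and $K$ the support of the Newton diagram of $Q$. Then $K$ has no overhang.
   Context: $s(x)=x_1+\dots+x_n$. $\mathcal H(n,d)$ is the set of $p\in\mathbb R[x_1,\dots,x_n]$ of degree $d$ with all coefficients nonnegative and $p(x)=1$ whenever $s(x)=1$. Writing $p=\sum_{k=0}^dp_k$ with $p_k$ homogeneous of degree $k$, the induced homogeneous polynomial is $P(X_0,\dots,X_n)=\sum_{k=0}^dp_k(X_1,\dots,X_n)(-X_0)^{d-k}-(-X_0)^d$; it vanishes where $S(X)=X_0+\dots+X_n=0$, so $P=SQ$. The Newton diagram of $Q$ assigns to $m\in\mathbb Z^n$ the value $P$, $0$, or $N$ according as the coefficient of $X_0^{d-1-|m|}X_1^{m_1}\cdots X_n^{m_n}$ in $Q$ is positive, zero (including when some exponent is negative), or negative ($|m|=m_1+\dots+m_n$); its support $K$ is the set of $m$ with nonzero value. Overhangs: for $K\subset\mathbb Z^2$, a point $(a,b)\in K$ with $(a,b)\ne(0,0)$ is a left overhang if $(a,b-1)\notin K$ and $(a-1,y)\notin K$ for all $y\ge b$; it is a right overhang if $(a-1,b)\notin K$ and $(x,b-1)\notin K$ for all $x\ge a$; an overhang is a left or right overhang. For $K\subset\mathbb Z^3$ define $\pi_1(m)=(m_1,m_2+m_3)$, $\pi_2(m)=(m_1+m_3,m_2)$, $\pi_3(m)=(m_1+m_2,m_3)$; $m\in K$ is an overhang if $\pi_j(m)$ is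 an overhang of $\pi_j(K)$ for some $j$. *)

From HB Require Import structures.
From mathcomp Require Import all_boot all_order all_algebra.
Set Implicit Arguments. Unset Strict Implicit. Unset Printing Implicit Defensive.
Import Order.TTheory GRing.Theory Num.Theory.
Local Open Scope ring_scope.

(* Exponent vectors of monomials in k variables. *)
Definition mon (k : nat) := {ffun 'I_k -> nat}.

Definition mdeg k (m : mon k) : nat := (\sum_(i < k) m i)%N.

(* A polynomial in k variables is given by its coefficient function
   (coefficient of x^m).  [p_fin d c]: all monomials of c have total degree <= d. *)
Definition p_fin (R : realFieldType) k (d : nat) (c : mon k -> R) : Prop :=
  forall m, (d < mdeg m)%N -> c m = 0.

Definition p_deg (R : realFieldType) k (d : nat) (c : mon k -> R) : Prop :=
  p_fin d c /\ exists m, mdeg m = d /\ c m != 0.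

(* Evaluation of a polynomial of degree <= d at x (exponents <= d suffice). *)
Definition p_eval (R : realFieldType) k (d : nat) (c : mon k -> R) (x : 'I_k -> R) : R :=
  \sum_(f : {ffun 'I_k -> 'I_d.+1})
     c [ffun i => nat_of_ord (f i)] * \prod_(i < k) x i ^+ f i.

Definition in_H (R : realFieldType) (n d : nat) (c : mon n -> R) : Prop :=
  p_deg d c /\ (forall m, 0 <= c m) /\
  (forall x : 'I_n -> R, \sum_(i < n) x i = 1 -> p_eval d c x = 1).

Definition hom_part (R : realFieldType) k (c : mon k -> R) (j : nat) (m : mon k) : R :=
  if mdeg m == j then c m else 0.

(* Variables X_0,...,X_n of P are indexed by 'I_n.+1, X_0 = ord0,
   X_(i+1) = lift ord0 i. *)
Definition tail_mon n (e : mon n.+1) : mon n := [ffun i => e (lift ord0 i)].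

(* Coefficient of X_0^(e 0) X_1^(e 1) ... X_n^(e n) in
   P = sum_(k=0)^d p_k(X_1..X_n) (-X_0)^(d-k) - (-X_0)^d. *)
Definition P_coef (R : realFieldType) n (d : nat) (c : mon n -> R) (e : mon n.+1) : R :=
  \sum_(k < d.+1)
     hom_part c k (tail_mon e) * (if e ord0 == (d - k)%N then (-1) ^+ (d - k)%N else 0)
  - (if (tail_mon e == [ffun => 0%N]) && (e ord0 == d) then (-1) ^+ d else 0).

Definition mon_dec k (e : mon k) (i : 'I_k) : mon k :=
  [ffun j => if j == i then (e j).-1 else e j].

(* P = S * Q, S = X_0 + ... + X_n, compared coefficientwise
   (coefficient of X^e in S*Q is sum over i with e_i > 0 of Q_(e - u_i)). *)
Definition is_S_quotient (R : realFieldType) n (d : nat) (c : mon n -> R)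
    (q : mon n.+1 -> R) : Prop :=
  forall e : mon n.+1,
    P_coef d c e = \sum_(i < n.+1 | (0 < e i)%N) q (mon_dec e i).

(* Coefficient of X_0^(d-1-|m|) X_1^(m_1) ... X_n^(m_n) in Q, 0 if some
   exponent is negative; m in Z^n. *)
Definition newton_coef (R : realFieldType) n (d : nat) (q : mon n.+1 -> R)
    (m : 'I_n -> int) : R :=
  let r : int := (d%:Z - 1 - \sum_(i < n) m i)%R in
  if [forall i, (0 <= m i)%R] && (0 <= r)%R then
    q [ffun j => if unlift ord0 j is Some i then absz (m i) else absz r]
  else 0.

Inductive nd_val := ndP | nd0 | ndN.

Definition newton_diagram (R : realFieldType) n d (q : mon n.+1 -> R) (m : 'I_n -> int)
  : nd_val :=
  let v := newton_coef d q m in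
  if 0 < v then ndP else if v < 0 then ndN else nd0.

Definition newton_support (R : realFieldType) n d (q : mon n.+1 -> R)
  (m : 'I_n -> int) : Prop := newton_diagram d q m <> nd0.

(* coordinate m_(j+1) of a point of Z^n (0 if out of range) *)
Definition coord n (m : 'I_n -> int) (j : nat) : int :=
  if insub j is Some i then m i else 0.

Definition left_overhang (K : int * int -> Prop) (a b : int) : Prop :=
  K (a, b) /\ (a, b) <> (0, 0) /\ ~ K (a, b - 1) /\
  (forall y : int, b <= y -> ~ K (a - 1, y)).

Definition right_overhang (K : int * int -> Prop) (a b : int) : Prop :=
  K (a, b) /\ (a, b) <> (0, 0) /\ ~ K (a - 1, b) /\
  (forall x : int, a <= x -> ~ K (x, b - 1)).

Definition overhang2 (K : int * int -> Prop) (pt : int * int) : Prop :=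
  left_overhang K pt.1 pt.2 \/ right_overhang K pt.1 pt.2.

Definition img2 n (f : ('I_n -> int) -> int * int) (K : ('I_n -> int) -> Prop)
  : int * int -> Prop := fun pt => exists m, K m /\ f m = pt.

(* For n = 2: the identity Z^2 -> Z^2;  for n = 3: pi_1, pi_2, pi_3. *)
Definition id2 n (m : 'I_n -> int) : int * int := (coord m 0, coord m 1).
Definition pi1 n (m : 'I_n -> int) : int * int := (coord m 0, coord m 1 + coord m 2).
Definition pi2 n (m : 'I_n -> int) : int * int := (coord m 0 + coord m 2, coord m 1).
Definition pi3 n (m : 'I_n -> int) : int * int := (coord m 0 + coord m 1, coord m 2).

Definition is_overhang n (K : ('I_n -> int) -> Prop) (m : 'I_n -> int) : Prop :=
  K m /\
  ((n = 2%N /\ overhang2 (img2 (@id2 n) K) (id2 m)) \/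
   (n = 3%N /\ (overhang2 (img2 (@pi1 n) K) (pi1 m) \/
                overhang2 (img2 (@pi2 n) K) (pi2 m) \/
                overhang2 (img2 (@pi3 n) K) (pi3 m)))).

Definition no_overhang n (K : ('I_n -> int) -> Prop) : Prop :=
  forall m, ~ is_overhang K m.

(* Write Q_m for the coefficient of X_0^(d-1-|m|) X^m in Q and set
   M(m) = - (-1)^(d-|m|) Q_m, so that K is the support of M.  Comparing the
   coefficients of X_0^(d-|m|) X^m in P = S Q gives, for m >= 0, 0 < |m| <= d,
       Q_m + sum_j Q_(m - e_j) = (-1)^(d-|m|) p_m,
   hence the sub-mean inequality M(m) <= sum_j M(m - e_j) since p_m >= 0;
   moreover M vanishes outside the simplex {m >= 0, |m| < d}.
   Each projection in the definition of an overhang is m |-> (sum_A m, sum_B m)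
   for a splitting A, B of the coordinates into two nonempty blocks.  If (a,b)
   were a left overhang of the image, an induction on the height shows M <= 0
   on the column {sum_A = a, sum_B >= b}, so M < 0 at the overhang point, and
   climbing along a B-coordinate keeps M < 0 beyond total degree d, which
   contradicts the support condition.  Right overhangs are left overhangs once
   the two blocks are exchanged. *)

From Pilot Require Import Defs.
From HB Require Import structures.
From mathcomp Require Import all_boot all_order all_algebra zify.
From Stdlib Require Import FunctionalExtensionality.
Import Order.TTheory GRing.Theory Num.Theory.
Set Implicit Arguments. Unset Strict Implicit.
Local Open Scope ring_scope.

Definition shift n (m : 'I_n -> int) (j : 'I_n) (k : int) : 'I_n -> int :=
  fun i => if i == j then m i + k else m i.

Lemma sum_shift n (P : pred 'I_n) (m : 'I_n -> int) j k :
  \sum_(i | P i) shift m j k i = \sum_(i | P i) m i + (if P j then k else 0).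
Proof.
rewrite /shift; case Pj: (P j); last first.
  rewrite addr0; apply: eq_bigr => i Pi; case: eqP => // eij.
  by rewrite -eij Pi in Pj.
rewrite (bigD1 j) //= [in RHS](bigD1 j) //= eqxx addrAC.
by congr (_ + _ + _); apply: eq_bigr => i /andP[_ /negbTE ->].
Qed.

Lemma shift_shift n (m : 'I_n -> int) j k l :
  shift (shift m j k) j l = shift m j (k + l).
Proof.
by apply: functional_extensionality => i; rewrite /shift; case: eqP; rewrite ?addrA.
Qed.

Lemma shift0 n (m : 'I_n -> int) j : shift m j 0 = m.
Proof. by apply: functional_extensionality => i; rewrite /shift addr0; case: eqP. Qed.

Definition split_sums n (A : pred 'I_n) (m : 'I_n -> int) : int * int :=
  (\sum_(i | A i) m i, \sum_(i | ~~ A i) m i).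

Section SubmeanLattice.
Variables (R : realFieldType) (n d : nat) (M : ('I_n -> int) -> R).

Hypothesis M_supp :
  forall m, M m != 0 -> (forall i, 0 <= m i) /\ \sum_i m i < d%:Z.
Hypothesis M_submean : forall m, (forall i, 0 <= m i) ->
  0 < \sum_i m i -> \sum_i m i <= d%:Z -> M m <= \sum_j M (shift m j (-1)).

(* B is the complement of A
   and contains the direction j0 used to climb. *)
Section Column.
Variables (A B : pred 'I_n) (j0 : 'I_n) (m0 : 'I_n -> int) (a b : int).
Hypothesis B_compl : forall i, B i = ~~ A i.
Hypothesis B_j0 : B j0.
Hypothesis m0_supp : M m0 != 0.
Hypothesis m0_A : \sum_(i | A i) m0 i = a.
Hypothesis m0_B : \sum_(i | B i) m0 i = b.
Hypothesis ab_nz : (a, b) <> (0, 0).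
Hypothesis gap_below : forall m,
  \sum_(i | A i) m i = a -> \sum_(i | B i) m i = b - 1 -> M m = 0.
Hypothesis gap_left : forall m,
  \sum_(i | A i) m i = a - 1 -> b <= \sum_(i | B i) m i -> M m = 0.

Lemma sum_split (m : 'I_n -> int) :
  \sum_i m i = \sum_(i | A i) m i + \sum_(i | B i) m i.
Proof. by rewrite (bigID A) /=; congr (_ + _); apply: eq_bigl => i; rewrite B_compl. Qed.

Lemma b_ge0 : 0 <= b.
Proof. by rewrite -m0_B sumr_ge0 // => i _; case: (M_supp m0_supp). Qed.

Lemma column_sum_pos m (k : nat) : (forall i, 0 <= m i) ->
  \sum_(i | A i) m i = a -> \sum_(i | B i) m i = b + k%:Z -> 0 < \sum_i m i.
Proof.
move=> m_ge0 mA mB; have a_ge0 : 0 <= a by rewrite -mA sumr_ge0.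
have := b_ge0; rewrite sum_split mA mB lt_neqAle => b0.
rewrite addr_ge0 ?addr_ge0 // andbT; apply/eqP => s0; apply: ab_nz.
congr pair; lia.
Qed.

(* M <= 0 on the column above (a, b), by induction on the height: a lower
   neighbour in an A-direction lies in the empty column a - 1; one in a
   B-direction lies at the empty point (a, b - 1) or lower in the column. *)
Lemma column_nonpos_at (k : nat) m :
  \sum_(i | A i) m i = a -> \sum_(i | B i) m i = b + k%:Z -> M m <= 0.
Proof.
elim: k m => [|k IH] m mA mB; have [->//|Mm_nz] := eqVneq (M m) 0;
  have [m_ge0 m_lt] := M_supp Mm_nz;
  apply: le_trans (M_submean m_ge0 (column_sum_pos m_ge0 mA mB) (ltW m_lt)) _;
  apply: sumr_le0 => j _; have := B_compl j; case Aj: (A j) => /= Bj.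
- by rewrite gap_left //; rewrite sum_shift /= ?Aj ?Bj ?mA ?mB ?addr0.
- by rewrite gap_below //; rewrite sum_shift /= ?Aj ?Bj ?mA ?mB ?addr0.
- by rewrite gap_left //; rewrite sum_shift /= ?Aj ?Bj ?mA ?mB ?addr0 ?lerDl.
- by apply: IH; rewrite sum_shift /= ?Aj ?Bj ?mA ?mB ?addr0//; lia.
Qed.

Lemma column_nonpos m :
  \sum_(i | A i) m i = a -> b <= \sum_(i | B i) m i -> M m <= 0.
Proof.
move=> mA mB.
by apply: (column_nonpos_at (k := absz (\sum_(i | B i) m i - b)%R) mA); lia.
Qed.

Lemma column_climb m : \sum_(i | A i) m i = a -> b <= \sum_(i | B i) m i ->
  M m < 0 -> M (shift m j0 1) <= M m.
Proof.
move=> mA mB Mm_lt; have [m_ge0 m_lt] := M_supp (ltr0_neq0 Mm_lt).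
have m'_ge0 i : 0 <= shift m j0 1 i.
  by rewrite /shift; case: eqP; rewrite ?addr_ge0.
have m'_sum : \sum_i shift m j0 1 i = \sum_i m i + 1.
  by rewrite (sum_shift predT).
apply: le_trans (M_submean m'_ge0 _ _) _; rewrite ?m'_sum ?lezD1 //.
  by rewrite ltr_wpDl // sumr_ge0.
rewrite (bigD1 j0) //= shift_shift addrN shift0 gerDl.
have Aj0 : A j0 = false by apply/negbTE; rewrite -B_compl.
apply: sumr_le0 => j _; have := B_compl j; case Aj: (A j) => /= Bj.
  rewrite gap_left //; rewrite !sum_shift /= ?Aj0 ?B_j0 ?Aj ?Bj ?mA ?addr0 //.
  by rewrite (le_trans mB) ?lerDl.
by apply: column_nonpos;
  rewrite !sum_shift /= ?Aj0 ?B_j0 ?Aj ?Bj ?mA ?addr0 ?addrK.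
Qed.

Lemma column_climb_iter (k : nat) : M (shift m0 j0 k%:Z) < 0.
Proof.
elim: k => [|k IH].
  by rewrite shift0 lt_neqAle m0_supp column_nonpos // m0_B.
have Aj0 : A j0 = false by apply/negbTE; rewrite -B_compl.
rewrite intS addrC -shift_shift; apply: le_lt_trans (column_climb _ _ IH) IH;
  by rewrite sum_shift /= ?Aj0 ?B_j0 ?m0_A ?m0_B ?addr0 ?lerDl.
Qed.

(* The ray leaves the simplex of degree < d: contradiction. *)
Lemma no_column_overhang : False.
Proof.
have [_] := M_supp (ltr0_neq0 (column_climb_iter d)).
have [m0_ge0 _] := M_supp m0_supp.
by rewrite (sum_shift predT) /= ltNge lerDr sumr_ge0.
Qed.
End Column.

Variable K : ('I_n -> int) -> Prop.
Hypothesis K_supp : forall m, K m <-> M m != 0.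

Lemma img2_gap (f : ('I_n -> int) -> int * int) pt :
  ~ img2 f K pt -> forall m, f m = pt -> M m = 0.
Proof.
by move=> nK m fm; apply/eqP/negPn/negP => /K_supp Km; apply: nK; exists m.
Qed.

(* No overhang for a block-sum projection with two nonempty blocks; a right
   overhang is a left overhang for the exchanged blocks. *)
Lemma no_split_overhang (A : pred 'I_n) jA jB f pt :
  A jA -> ~~ A jB -> f =1 split_sums A -> ~ overhang2 (img2 f K) pt.
Proof.
move=> AjA AjB f_split; case: pt => a b.
case=> [[[m0 [Km0 fm0]] [ab [nbelow nleft]]] | [[m0 [Km0 fm0]] [ab [nleft nbelow]]]];
  move: fm0; rewrite f_split => -[m0A m0B]; have /K_supp m0_supp := Km0.
- apply: (no_column_overhang (B := fun i => ~~ A i) _ AjB m0_supp m0A m0B ab)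
    => // m mA mB.
  + by apply: (img2_gap nbelow); rewrite f_split /split_sums mA mB.
  + by apply: (img2_gap (nleft _ mB)); rewrite f_split /split_sums mA.
- have A_compl i : A i = ~~ ~~ A i by rewrite negbK.
  apply: (no_column_overhang A_compl AjA m0_supp m0B m0A)
    => [[eb ea]|m mB mA|m mB mA].
  + by apply: ab; rewrite ea eb.
  + by apply: (img2_gap nleft); rewrite f_split /split_sums mA mB.
  + by apply: (img2_gap (nbelow _ mA)); rewrite f_split /split_sums mB.
Qed.
End SubmeanLattice.

Definition homog n (t : int) (m : 'I_n -> int) : mon n.+1 :=
  [ffun j => if unlift ord0 j is Some i then absz (m i)
             else absz (t - \sum_i m i)%R].

Lemma homog0 n t (m : 'I_n -> int) : homog t m ord0 = absz (t - \sum_i m i)%R.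
Proof. by rewrite ffunE unlift_none. Qed.

Lemma homog_lift n t (m : 'I_n -> int) j : homog t m (lift ord0 j) = absz (m j).
Proof. by rewrite ffunE liftK. Qed.

Lemma tail_homog n t (m : 'I_n -> int) :
  tail_mon (homog t m) = [ffun i => absz (m i)].
Proof. by apply/ffunP => i; rewrite !ffunE liftK. Qed.

Lemma mdeg_abs n (m : 'I_n -> int) : (forall i, 0 <= m i) ->
  (mdeg [ffun i => absz (m i)])%:Z = \sum_i m i.
Proof.
move=> m_ge0; rewrite /mdeg (big_morph Posz PoszD (erefl _)).
by apply: eq_bigr => i _; rewrite ffunE gez0_abs.
Qed.

Lemma mon_dec_homog0 n t (m : 'I_n -> int) : 0 < t - \sum_i m i ->
  mon_dec (homog t m) ord0 = homog (t - 1) m.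
Proof.
move=> pos; apply/ffunP => j; rewrite !ffunE; case: (unliftP ord0 j) => [i ->|->].
  by rewrite eq_sym (negbTE (neq_lift _ _)).
rewrite eqxx; lia.
Qed.

Lemma mon_dec_homog_lift n t (m : 'I_n -> int) j : 0 < m j ->
  mon_dec (homog t m) (lift ord0 j) = homog (t - 1) (shift m j (-1)).
Proof.
move=> pos; apply/ffunP => i; rewrite !ffunE (sum_shift predT) /=.
case: (unliftP ord0 i) => [i' ->|->]; last first.
  by rewrite (negbTE (neq_lift _ _)); congr absz; lia.
rewrite (inj_eq (@lift_inj _ ord0)) /shift; case: eqP => [->|//]; lia.
Qed.

Lemma P_coef_interior (R : realFieldType) n d (c : mon n -> R) (e : mon n.+1) :
  (0 < mdeg (tail_mon e))%N -> (e ord0 + mdeg (tail_mon e) = d)%N ->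
  P_coef d c e = (-1) ^+ (e ord0) * c (tail_mon e).
Proof.
move=> deg_pos deg_e; rewrite /P_coef.
have -> : (tail_mon e == [ffun => 0%N]) = false.
  apply/negbTE; apply: contraTneq deg_pos => ->.
  by rewrite /mdeg big1 // => i _; rewrite ffunE.
have lt_deg : (mdeg (tail_mon e) < d.+1)%N by rewrite -deg_e ltnS leq_addl.
rewrite subr0 (bigD1 (Ordinal lt_deg)) //= big1 ?addr0.
  by rewrite /hom_part eqxx -deg_e addnK eqxx mulrC.
move=> k /negbTE k_ne; rewrite /hom_part; case: eqP => [deg_k|]; last by rewrite mul0r.
by move: k_ne; rewrite -val_eqE /= deg_k eqxx.
Qed.

Definition signed_newton (R : realFieldType) n d (q : mon n.+1 -> R)
    (m : 'I_n -> int) : R :=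
  - ((-1) ^+ absz (d%:Z - \sum_i m i)%R * newton_coef d q m).

Lemma signed_newton_eq0 (R : realFieldType) n d (q : mon n.+1 -> R) m :
  (signed_newton d q m != 0) = (newton_coef d q m != 0).
Proof. by rewrite /signed_newton oppr_eq0 mulf_eq0 signr_eq0. Qed.

Lemma newton_supportE (R : realFieldType) n d (q : mon n.+1 -> R) m :
  newton_support d q m <-> signed_newton d q m != 0.
Proof.
rewrite signed_newton_eq0 /newton_support /newton_diagram.
by case: ltgtP.
Qed.

Lemma signed_newton_supp (R : realFieldType) n d (q : mon n.+1 -> R) m :
  signed_newton d q m != 0 -> (forall i, 0 <= m i) /\ \sum_i m i < d%:Z.
Proof.
rewrite signed_newton_eq0 /newton_coef.
case: ifP => [/andP[/forallP m_ge0 r_ge0] _|]; last by rewrite eqxx.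
by split=> //; move: r_ge0; rewrite addrAC subr_ge0 -gtz0_ge1 subr_gt0.
Qed.

Section NewtonDiagram.
Variables (R : realFieldType) (n d : nat) (c : mon n -> R) (q : mon n.+1 -> R).
Hypothesis PSQ : is_S_quotient d c q.

(* Coefficient of X_0^(d-|m|) X^m in P = S Q. *)
Lemma newton_recurrence m : (forall i, 0 <= m i) ->
  0 < \sum_i m i -> \sum_i m i <= d%:Z ->
  newton_coef d q m + \sum_j newton_coef d q (shift m j (-1))
  = (-1) ^+ absz (d%:Z - \sum_i m i)%R * c [ffun i => absz (m i)].
Proof.
move=> m_ge0 m_pos m_le; have deg_m := mdeg_abs m_ge0.
have := PSQ (homog d m).
rewrite P_coef_interior tail_homog ?homog0 => [->||]; last 2 first.
- by rewrite -ltz_nat deg_m.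
- by apply/eqP; rewrite -eqz_nat PoszD gez0_abs ?subr_ge0 // deg_m subrK.
rewrite [RHS]big_mkcond [RHS]big_ord_recl /= homog0; congr (_ + _).
  rewrite /newton_coef; have -> : [forall i, 0 <= m i] by apply/forallP.
  move: m_le; rewrite le_eqVlt => /orP[/eqP eq_d|lt_d].
    by rewrite eq_d subrr addrAC subrr.
  have d_pos : (0 < absz (d%:Z - \sum_i m i)%R)%N.
    by rewrite absz_gt0 subr_eq0 gt_eqF.
  have r_ge0 : 0 <= d%:Z - 1 - \sum_i m i.
    by rewrite addrAC subr_ge0 -gtz0_ge1 subr_gt0.
  by rewrite r_ge0 d_pos mon_dec_homog0 ?subr_gt0.
apply: eq_bigr => j _; rewrite homog_lift /newton_coef.
move: (m_ge0 j); rewrite le_eqVlt => /orP[/eqP mj0 | mj_pos].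
  rewrite -mj0 /=; case: forallP => // shift_ge0.
  by have := shift_ge0 j; rewrite /shift eqxx -mj0.
have -> : [forall i, 0 <= shift m j (-1) i].
  apply/forallP => i; rewrite /shift; case: eqP => [->|_] //.
  by rewrite subr_ge0 -gtz0_ge1.
have -> : 0 <= d%:Z - 1 - \sum_i shift m j (-1) i.
  by rewrite (sum_shift predT) /= opprD opprK addrA addrAC subrK subr_ge0.
by rewrite absz_gt0 gt_eqF // mon_dec_homog_lift.
Qed.

Hypothesis c_ge0 : forall m, 0 <= c m.

(* Nonnegativity of p turns the recurrence into the sub-mean inequality. *)
Lemma signed_newton_submean m : (forall i, 0 <= m i) ->
  0 < \sum_i m i -> \sum_i m i <= d%:Z ->
  signed_newton d q m <= \sum_j signed_newton d q (shift m j (-1)).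
Proof.
move=> m_ge0 m_pos m_le; rewrite -subr_ge0.
set s := absz (d%:Z - \sum_i m i)%R.
have sign_shift j : signed_newton d q (shift m j (-1))
    = (-1) ^+ s * newton_coef d q (shift m j (-1)).
  rewrite /signed_newton (sum_shift predT) /=.
  have -> : absz (d%:Z - (\sum_i m i + -1))%R = s.+1 by rewrite /s; lia.
  by rewrite exprS mulN1r mulNr opprK.
rewrite (eq_bigr _ (fun j _ => sign_shift j)) -mulr_sumr /signed_newton opprK.
by rewrite -mulrDr addrC newton_recurrence // signrMK.
Qed.

Lemma newton_no_split_overhang (A : pred 'I_n) jA jB f pt :
  A jA -> ~~ A jB -> f =1 split_sums A ->
  ~ overhang2 (img2 f (newton_support d q)) pt.
Proof.
exact: (no_split_overhang (@signed_newton_supp _ _ d q) signed_newton_submean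
  (newton_supportE d q)).
Qed.
End NewtonDiagram.

Lemma coordE n (m : 'I_n -> int) (i : 'I_n) : Defs.coord m i = m i.
Proof. by rewrite /Defs.coord valK. Qed.

Lemma split_sumsE n (A : pred 'I_n) (m : 'I_n -> int) :
  split_sums A m =
  (\sum_i (if A i then m i else 0), \sum_i (if A i then 0 else m i)).
Proof.
by rewrite /split_sums; congr pair; rewrite big_mkcond; apply: eq_bigr => i _;
  case: (A i).
Qed.

Lemma id2E (m : 'I_2 -> int) : id2 m = split_sums (fun i => val i \in [:: 0]%N) m.
Proof.
by rewrite split_sumsE !big_ord_recl !big_ord0 /id2 /= -!coordE /= !addr0 ?add0r.
Qed.

Lemma pi1E (m : 'I_3 -> int) : pi1 m = split_sums (fun i => val i \in [:: 0]%N) m.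
Proof.
by rewrite split_sumsE !big_ord_recl !big_ord0 /pi1 /= -!coordE /= !addr0 ?add0r.
Qed.

Lemma pi2E (m : 'I_3 -> int) : pi2 m = split_sums (fun i => val i \in [:: 0; 2]%N) m.
Proof.
by rewrite split_sumsE !big_ord_recl !big_ord0 /pi2 /= -!coordE /= !addr0 ?add0r.
Qed.

Lemma pi3E (m : 'I_3 -> int) : pi3 m = split_sums (fun i => val i \in [:: 0; 1]%N) m.
Proof.
by rewrite split_sumsE !big_ord_recl !big_ord0 /pi3 /= -!coordE /= !addr0 ?add0r.
Qed.

Unset Implicit Arguments.
Theorem mainTheorem14 (R : realFieldType) (n d : nat) (c : mon n -> R)
    (q : mon n.+1 -> R) :
  (n = 2%N \/ n = 3%N) -> (1 <= d)%N -> in_H d c ->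
  is_S_quotient d c q ->
  no_overhang (newton_support d q).
Proof.
move=> _ _ [_ [c_ge0 _]] PSQ m [_ ov].
case: ov => [[n2 ov] | [n3 [ov|[ov|ov]]]]; subst n.
- by apply: (newton_no_split_overhang PSQ c_ge0 (jA := ord0)
    (jB := lift ord0 ord0) _ _ id2E ov).
- by apply: (newton_no_split_overhang PSQ c_ge0 (jA := ord0)
    (jB := lift ord0 ord0) _ _ pi1E ov).
- by apply: (newton_no_split_overhang PSQ c_ge0 (jA := ord0)
    (jB := lift ord0 ord0) _ _ pi2E ov).
- by apply: (newton_no_split_overhang PSQ c_ge0 (jA := ord0)
    (jB := lift ord0 (lift ord0 ord0)) _ _ pi3E ov).
Qed.
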